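(* Let $C$ be a Reedy category and $D$ a category. Suppose a functor $F\colon\mathrm{Down}_*(C)\to D$ sends every $\mathrm{last}$-weak equivalence to an isomorphism. Then there exist a functor $\tilde F\colon C\to D$ and a natural isomorphism $\tilde F\circ\mathrm{last}\cong F$.
   Context: A Reedy category $(C,C_-,C_+)$: wide subcategories with unique factorization of every morphism as ($C_-$ then $C_+$), every morphism of $C_\pm$ decidably identity or not, and the relation ($x<'y$ iff non-identity $x\to y$ in $C_+$ or non-identity $y\to x$ in $C_-$) well-founded. $\Delta$: finite ordinals $[n]$ and order-preserving maps. $\int N^{-,+}(C)$: objects $([n],X)$ with $X\colon[n]\to C$ a functor sending all morphisms into $C_-$; morphisms $([m],X)\to([n],Y)$ are $(\alpha,\theta)$ with $\alpha\colon[m]\to[n]$ in $\Delta$ and $\theta\colon X\Rightarrow Y\circ\alpha$ with all components in $C_+$; composition $(\beta,\varphi)\circ(\alpha,\theta)=(\beta\alpha,(\varphi\alpha)\circ\theta)$. Order on hom-sets: $(\alpha,\theta)\le(\alpha',\theta')$ iff $\alpha\le\alpha'$ pointwise and $\theta'_i=Y(\alpha(i)\le\alpha'(i))\circ\theta_i$. $\mathrm{Down}_*(C)$: same objects, hom-sets quotiented by the equivalence relation generated by $\le$. $\mathrm{last}\colon\mathrm{Down}_*(C)\to C$ is induced by $\mathrm{last}([n],X)=X(n)$, $\mathrm{last}(\alpha,\theta)=Y(\alpha(m)\le n)\circ\theta_m$. A $\mathrm{last}$-weak equivalence is a morphism sent by $\mathrm{last}$ to an identity. *)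

From mathcomp Require Import all_boot.
From Stdlib Require Import Relations.

Set Implicit Arguments.
Unset Strict Implicit.
Unset Printing Implicit Defensive.

(* hcomp g f = g o f.                                                    *)
Record Category := {
  ob : Type;
  hom : ob -> ob -> Type;
  idm : forall a, hom a a;
  hcomp : forall a b c, hom b c -> hom a b -> hom a c;
  comp_id_l : forall a b (f : hom a b), hcomp (idm b) f = f;
  comp_id_r : forall a b (f : hom a b), hcomp f (idm a) = f;
  comp_assoc : forall a b c d (f : hom a b) (g : hom b c) (h : hom c d),
      hcomp h (hcomp g f) = hcomp (hcomp h g) f
}.
Arguments hom {_} a b.
Arguments idm {_} a.
Arguments hcomp {_ a b c} g f.

Record Functor (C D : Category) := {
  fob : ob C -> ob D;
  fhom : forall a b, hom a b -> hom (fob a) (fob b);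
  fhom_id : forall a, fhom (idm a) = idm (fob a);
  fhom_comp : forall a b c (g : hom b c) (f : hom a b),
      fhom (hcomp g f) = hcomp (fhom g) (fhom f)
}.
Arguments fob {C D} _ a.
Arguments fhom {C D} _ {a b} f.

Definition is_id (C : Category) (a b : ob C) (f : hom a b) : Prop :=
  exists e : a = b, eq_rect a (fun z => hom a z) (idm a) b e = f.

Definition is_iso (C : Category) (a b : ob C) (f : hom a b) : Prop :=
  exists g : hom b a, hcomp g f = idm a /\ hcomp f g = idm b.

Record Reedy (C : Category) := {
  Rm : forall a b : ob C, hom a b -> Prop;
  Rp : forall a b : ob C, hom a b -> Prop;
  Rm_id : forall a, Rm (idm a);
  Rp_id : forall a, Rp (idm a);
  Rm_comp : forall a b c (g : hom b c) (f : hom a b),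
      Rm f -> Rm g -> Rm (hcomp g f);
  Rp_comp : forall a b c (g : hom b c) (f : hom a b),
      Rp f -> Rp g -> Rp (hcomp g f);
  R_fact : forall a b (f : hom a b),
      exists z (g : hom a z) (h : hom z b), Rm g /\ Rp h /\ hcomp h g = f;
  R_fact_uniq : forall a b (f : hom a b) z (g : hom a z) (h : hom z b)
      z' (g' : hom a z') (h' : hom z' b),
      Rm g -> Rp h -> hcomp h g = f ->
      Rm g' -> Rp h' -> hcomp h' g' = f ->
      existT (fun w => (hom a w * hom w b)%type) z (g, h)
      = existT (fun w => (hom a w * hom w b)%type) z' (g', h');
  Rm_dec : forall a b (f : hom a b), Rm f -> is_id f \/ ~ is_id f;
  Rp_dec : forall a b (f : hom a b), Rp f -> is_id f \/ ~ is_id f;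
  R_wf : well_founded (fun x y : ob C =>
      (exists f : hom x y, Rp f /\ ~ is_id f) \/
      (exists f : hom y x, Rm f /\ ~ is_id f))
}.
Arguments Rm {C} _ {a b} f.
Arguments Rp {C} _ {a b} f.

(* Delta: [n] = {0,...,n} is 'I_n.+1; order-preserving maps.            *)
Record Dmap (m n : nat) := {
  dfun :> 'I_m.+1 -> 'I_n.+1;
  dmono : forall i j : 'I_m.+1, i <= j -> dfun i <= dfun j
}.
Arguments dmono {m n} d {i j} h.

Definition did (n : nat) : Dmap n n :=
  {| dfun := fun i => i; dmono := fun i j h => h |}.

Definition dcomp (m n p : nat) (b : Dmap n p) (a : Dmap m n) : Dmap m p :=
  {| dfun := fun i => b (a i); dmono := fun i j h => dmono b (dmono a h) |}.

Section Down.
Variables (C : Category) (R : Reedy C).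

(* Objects of int N^{-,+}(C) (and of Down_*(C)): ([n], X) with
   X : [n] -> C a functor sending every morphism into C_-. *)
Record NOb := {
  len : nat;
  Xo : 'I_len.+1 -> ob C;
  Xm : forall i j : 'I_len.+1, i <= j -> hom (Xo i) (Xo j);
  Xm_id : forall (i : 'I_len.+1) (h : i <= i), Xm h = idm (Xo i);
  Xm_comp : forall i j k : 'I_len.+1, forall (h1 : i <= j) (h2 : j <= k) (h3 : i <= k),
      Xm h3 = hcomp (Xm h2) (Xm h1);
  Xm_minus : forall (i j : 'I_len.+1) (h : i <= j), Rm R (Xm h)
}.
Arguments Xm n {i j} h.
Arguments Xo : clear implicits.

Record NHom (x y : NOb) := {
  alpha : Dmap (len x) (len y);
  theta : forall i, hom (Xo x i) (Xo y (alpha i));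
  theta_plus : forall i, Rp R (theta i);
  theta_nat : forall (i j : 'I_(len x).+1) (h : i <= j),
      hcomp (theta j) (Xm x h) = hcomp (Xm y (dmono alpha h)) (theta i)
}.

Lemma Nid_nat (x : NOb) (i j : 'I_(len x).+1) (h : i <= j) :
  hcomp (idm (Xo x j)) (Xm x h) = hcomp (Xm x (dmono (did (len x)) h)) (idm (Xo x i)).
Proof. by rewrite comp_id_l comp_id_r. Qed.

Definition Nid (x : NOb) : NHom x x :=
  {| alpha := did (len x);
     theta := fun i => idm (Xo x i);
     theta_plus := fun i => Rp_id R (Xo x i);
     theta_nat := @Nid_nat x |}.

Section Comp.
Variables (x y z : NOb) (g : NHom y z) (f : NHom x y).

Definition Ncomp_theta (i : 'I_(len x).+1) :
  hom (Xo x i) (Xo z (dcomp (alpha g) (alpha f) i)) :=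
  hcomp (theta g (alpha f i)) (theta f i).

Lemma Ncomp_plus i : Rp R (Ncomp_theta i).
Proof. by apply: Rp_comp; [apply: theta_plus | apply: theta_plus]. Qed.

Lemma Ncomp_nat (i j : 'I_(len x).+1) (h : i <= j) :
  hcomp (Ncomp_theta j) (Xm x h) =
  hcomp (Xm z (dmono (dcomp (alpha g) (alpha f)) h)) (Ncomp_theta i).
Proof.
rewrite /Ncomp_theta -comp_assoc theta_nat comp_assoc theta_nat.
by rewrite -comp_assoc.
Qed.

Definition Ncomp : NHom x z :=
  {| alpha := dcomp (alpha g) (alpha f);
     theta := Ncomp_theta;
     theta_plus := Ncomp_plus;
     theta_nat := Ncomp_nat |}.
End Comp.

Definition Nle (x y : NOb) (f f' : NHom x y) : Prop :=
  exists H : forall i, alpha f i <= alpha f' i,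
    forall i, theta f' i = hcomp (Xm y (H i)) (theta f i).

(* Hom-sets of Down_*(C): NHom x y quotiented by the equivalence
   relation generated by Nle. *)
Definition Down_equiv (x y : NOb) : relation (NHom x y) :=
  clos_refl_sym_trans (NHom x y) (@Nle x y).

Definition lastD (x : NOb) : ob C := Xo x ord_max.

Definition lastD_hom (x y : NOb) (f : NHom x y) : hom (lastD x) (lastD y) :=
  hcomp (Xm y (leq_ord (alpha f ord_max) : alpha f ord_max <= ord_max))
       (theta f ord_max).

Definition lastD_weq (x y : NOb) (f : NHom x y) : Prop := is_id (lastD_hom f).

(* A functor Down_*(C) -> D, i.e. a functor on int N^{-,+}(C) which is
   constant on the equivalence classes of Down_equiv (the quotient). *)
Record DownFunctor (D : Category) := {
  DFo : NOb -> ob D;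
  DFh : forall x y, NHom x y -> hom (DFo x) (DFo y);
  DFh_resp : forall x y (f f' : NHom x y), Down_equiv f f' -> DFh f = DFh f';
  DFh_id : forall x, DFh (Nid x) = idm (DFo x);
  DFh_comp : forall x y z (g : NHom y z) (f : NHom x y),
      DFh (Ncomp g f) = hcomp (DFh g) (DFh f)
}.

End Down.

(** [Ft c] is [F] of the one-point chain [point c], and [eta_last x] is [F] of
    the last-weak equivalence [last_incl x : point (last x) -> x].  A morphism
    [last f] is sent to [eta^-1 \o F f \o eta]; but [last f] always factors as
    [C_+] followed by [C_-], so a general [u = h \o g] ([g] in [C_-], [h] in
    [C_+]) needs [eta] inverted once more, at the two-point chain [chain1 g].
    Naturality holds because every [f] with [last f = h \o g] factors through
    [chain1 g].  For functoriality, uniqueness of Reedy factorizations reduces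
    a composite to composites of two [C_+] maps, a [C_+] then a [C_-] map, or
    two [C_-] maps, each of which is [last] of a composite in [Down_*(C)]
    (the last kind through the three-point chain [chain2]). *)
From mathcomp Require Import all_boot.
From Stdlib Require Import Relations ClassicalEpsilon.

Set Implicit Arguments.
Unset Strict Implicit.
Unset Printing Implicit Defensive.

Section IsoInverse.
Variables (D : Category) (a b : ob D) (f : hom a b) (f_iso : is_iso f).

Definition iso_inv : hom b a :=
  proj1_sig (constructive_indefinite_description _ f_iso).

Lemma iso_inv_l : hcomp iso_inv f = idm a.
Proof. by rewrite /iso_inv; case: constructive_indefinite_description => g []. Qed.

Lemma iso_inv_r : hcomp f iso_inv = idm b.
Proof. by rewrite /iso_inv; case: constructive_indefinite_description => g []. Qed.

Lemma iso_inv_comp_eq (c : ob D) (u : hom c a) (w : hom c b) :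
  hcomp f u = w -> u = hcomp iso_inv w.
Proof. by move<-; rewrite comp_assoc iso_inv_l comp_id_l. Qed.

End IsoInverse.

Section DownConstructions.
Variables (C : Category) (R : Reedy C).

Lemma lastD_hom_id (x : NOb R) : lastD_hom (Nid x) = idm (lastD x).
Proof. by rewrite /lastD_hom Xm_id comp_id_l. Qed.

Lemma lastD_hom_comp (x y z : NOb R) (g : NHom y z) (f : NHom x y) :
  lastD_hom (Ncomp g f) = hcomp (lastD_hom g) (lastD_hom f).
Proof.
rewrite /lastD_hom /= /Ncomp_theta -!comp_assoc [hcomp (theta g _) (hcomp _ _)]comp_assoc.
rewrite theta_nat -!comp_assoc [RHS]comp_assoc.
by apply: f_equal2 => //; apply: Xm_comp.
Qed.

Definition point (c : ob C) : NOb R :=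
  @Build_NOb C R 0 (fun _ => c) (fun _ _ _ => idm c) (fun _ _ => erefl)
    (fun _ _ _ _ _ _ => esym (comp_id_l (idm c))) (fun _ _ _ => Rm_id R c).

Definition const_dmap (m n : nat) (k : 'I_n.+1) : Dmap m n :=
  @Build_Dmap m n (fun _ => k) (fun _ _ _ => leqnn k).

Section PointHom.
Variables (c : ob C) (y : NOb R) (k : 'I_(len y).+1) (th : hom c (Xo k)) (th_plus : Rp R th).

Lemma point_hom_nat (i j : 'I_1) (h : i <= j) :
  hcomp th (idm c) = hcomp (Xm (n:=y) (dmono (const_dmap 0 k) h)) th.
Proof. by rewrite Xm_id comp_id_l comp_id_r. Qed.

Definition point_hom : NHom (point c) y :=
  @Build_NHom C R (point c) y (const_dmap 0 k) (fun _ => th) (fun _ => th_plus)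
    point_hom_nat.

End PointHom.

Definition last_incl (x : NOb R) : NHom (point (lastD x)) x :=
  point_hom (Rp_id R (Xo (n:=x) ord_max)).

Lemma last_incl_weq (x : NOb R) : lastD_weq (last_incl x).
Proof. by exists erefl; rewrite /= /lastD_hom Xm_id comp_id_l. Qed.

Definition point_plus (c d : ob C) (h : hom c d) (h_plus : Rp R h) :
  NHom (point c) (point d) := point_hom (y:=point d) (k:=ord0) h_plus.

Lemma lastD_point_plus (c d : ob C) (h : hom c d) (h_plus : Rp R h) :
  lastD_hom (point_plus h_plus) = h.
Proof. exact: comp_id_l. Qed.

Section Chain1.
Variables (c z : ob C) (g : hom c z) (g_minus : Rm R g).

Definition chain1_ob (a : nat) : ob C := if a is 0 then c else z.

Definition chain1_hom (a b : nat) : a <= b -> hom (chain1_ob a) (chain1_ob b) :=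
  match a, b with
  | 0, 0 => fun _ => idm c
  | 0, _.+1 => fun _ => g
  | _.+1, 0 => fun h => False_rect _ (Bool.diff_false_true h)
  | _.+1, _.+1 => fun _ => idm z
  end.

Lemma chain1_hom_id (i : 'I_2) (h : i <= i) : chain1_hom h = idm _.
Proof. by case: i h => [[|[|i]] Hi] h. Qed.

Lemma chain1_hom_comp (i j k : 'I_2) (h1 : i <= j) (h2 : j <= k) (h3 : i <= k) :
  chain1_hom h3 = hcomp (chain1_hom h2) (chain1_hom h1).
Proof.
case: i h1 h3 => [[|[|i]] Hi] //; case: j h2 => [[|[|j]] Hj] //;
  case: k => [[|[|k]] Hk] // h1 h2 h3 /=; by rewrite ?comp_id_l ?comp_id_r.
Qed.

Lemma chain1_hom_minus (i j : 'I_2) (h : i <= j) : Rm R (chain1_hom h).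
Proof. by case: i h => [[|[|i]] Hi] //; case: j => [[|[|j]] Hj] // h; apply: Rm_id. Qed.

Definition chain1 : NOb R :=
  @Build_NOb C R 1 (fun i => chain1_ob i) (fun i j h => chain1_hom h)
    chain1_hom_id chain1_hom_comp chain1_hom_minus.

Definition chain1_incl : NHom (point c) chain1 := point_hom (y:=chain1) (k:=ord0) (Rp_id R c).

Lemma lastD_chain1_incl : lastD_hom chain1_incl = g.
Proof. exact: comp_id_r. Qed.

End Chain1.

Section Chain2.
Variables (c z e : ob C) (g : hom c z) (m : hom z e) (g_minus : Rm R g) (m_minus : Rm R m).

Definition chain2_ob (a : nat) : ob C := match a with 0 => c | 1 => z | _ => e end.

Definition chain2_hom (a b : nat) : a <= b -> hom (chain2_ob a) (chain2_ob b) :=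
  match a, b with
  | 0, 0 => fun _ => idm c
  | 0, 1 => fun _ => g
  | 0, _.+2 => fun _ => hcomp m g
  | 1, 1 => fun _ => idm z
  | 1, _.+2 => fun _ => m
  | _.+2, _.+2 => fun _ => idm e
  | _, _ => fun h => False_rect _ (Bool.diff_false_true h)
  end.

Lemma chain2_hom_id (i : 'I_3) (h : i <= i) : chain2_hom h = idm _.
Proof. by case: i h => [[|[|[|i]]] Hi] h. Qed.

Lemma chain2_hom_comp (i j k : 'I_3) (h1 : i <= j) (h2 : j <= k) (h3 : i <= k) :
  chain2_hom h3 = hcomp (chain2_hom h2) (chain2_hom h1).
Proof.
case: i h1 h3 => [[|[|[|i]]] Hi] //; case: j h2 => [[|[|[|j]]] Hj] //;
  case: k => [[|[|[|k]]] Hk] // h1 h2 h3 /=; by rewrite ?comp_id_l ?comp_id_r.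
Qed.

Lemma chain2_hom_minus (i j : 'I_3) (h : i <= j) : Rm R (chain2_hom h).
Proof.
case: i h => [[|[|[|i]]] Hi] //; case: j => [[|[|[|j]]] Hj] // h /=;
  by [apply: Rm_id | apply: Rm_comp].
Qed.

Definition chain2 : NOb R :=
  @Build_NOb C R 2 (fun i => chain2_ob i) (fun i j h => chain2_hom h)
    chain2_hom_id chain2_hom_comp chain2_hom_minus.

Definition chain12_dmap : Dmap 1 2 :=
  @Build_Dmap 1 2 (widen_ord (leqnSn 2)) (fun _ _ h => h).

Definition chain12_theta (a : nat) : hom (chain1_ob c z a) (chain2_ob a) :=
  match a with 0 => idm c | 1 => idm z | _ => m end.

Lemma chain12_theta_plus (i : 'I_2) : Rp R (chain12_theta i).
Proof. by case: i => [[|[|i]] Hi] //; apply: Rp_id. Qed.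

Lemma chain12_theta_nat (i j : 'I_2) (h : i <= j) :
  hcomp (chain12_theta j) (Xm (n:=chain1 g_minus) h)
  = hcomp (Xm (n:=chain2) (dmono chain12_dmap h)) (chain12_theta i).
Proof.
move: h; case: i => [[|[|i]] Hi] //; case: j => [[|[|j]] Hj] // h /=;
  by rewrite ?comp_id_l ?comp_id_r.
Qed.

Definition chain12 : NHom (chain1 g_minus) chain2 :=
  @Build_NHom C R (chain1 g_minus) chain2 chain12_dmap (fun i => chain12_theta i)
    chain12_theta_plus chain12_theta_nat.

Lemma lastD_chain12 : lastD_hom chain12 = m.
Proof. exact: comp_id_r. Qed.

End Chain2.

Section Chain1Lift.
Variables (x y : NOb R) (f : NHom x y) (z : ob C) (g : hom (lastD x) z) (h : hom z (lastD y))
  (g_minus : Rm R g) (h_plus : Rp R h) (gh_last : hcomp h g = lastD_hom f).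

Definition chain1_lift_dmap : Dmap 1 (len y).
Proof.
exists (fun i : 'I_2 => if val i is 0 then alpha f ord_max else ord_max).
by case=> [[|[|i]] Hi] // [[|[|j]] Hj] //= _; apply: leq_ord.
Defined.

Definition chain1_lift_theta (a : nat) :
  hom (chain1_ob (lastD x) z a) (Xo (n:=y) (if a is 0 then alpha f ord_max else ord_max)) :=
  if a is 0 then theta f ord_max else h.

Lemma chain1_lift_theta_plus (i : 'I_2) : Rp R (chain1_lift_theta i).
Proof. by case: i => [[|[|i]] Hi] //; apply: theta_plus. Qed.

Lemma chain1_lift_theta_nat (i j : 'I_2) (hij : i <= j) :
  hcomp (chain1_lift_theta j) (Xm (n:=chain1 g_minus) hij)
  = hcomp (Xm (n:=y) (dmono chain1_lift_dmap hij)) (chain1_lift_theta i).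
Proof.
(* the case [0 <= 1] is [gh_last] *)
move: hij; case: i => [[|[|i]] Hi] //; case: j => [[|[|j]] Hj] // hij /=;
  by rewrite ?Xm_id ?comp_id_l ?comp_id_r.
Qed.

Definition chain1_lift : NHom (chain1 g_minus) y :=
  @Build_NHom C R (chain1 g_minus) y chain1_lift_dmap (fun i => chain1_lift_theta i)
    chain1_lift_theta_plus chain1_lift_theta_nat.

Lemma chain1_lift_incl :
  Nle (Ncomp chain1_lift (chain1_incl g_minus)) (Ncomp f (last_incl x)).
Proof.
exists (fun _ => leqnn _) => i /=.
by rewrite /Ncomp_theta /= Xm_id comp_id_l comp_id_r.
Qed.

Lemma chain1_lift_last :
  Nle (Ncomp chain1_lift (last_incl (chain1 g_minus))) (Ncomp (last_incl y) (point_plus h_plus)).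
Proof.
exists (fun _ => leqnn _) => i /=.
by rewrite /Ncomp_theta /= Xm_id !comp_id_l !comp_id_r.
Qed.

End Chain1Lift.

End DownConstructions.

Section PushDown.
Variables (C : Category) (R : Reedy C) (D : Category) (F : DownFunctor R D).

Lemma DFh_le (x y : NOb R) (f f' : NHom x y) : Nle f f' -> DFh F f = DFh F f'.
Proof. by move=> le_ff'; apply: DFh_resp; apply: rst_step. Qed.

Hypothesis last_incl_iso : forall x : NOb R, is_iso (DFh F (last_incl x)).

Definition Ft_ob (c : ob C) : ob D := DFo F (point R c).

Definition eta_last (x : NOb R) : hom (Ft_ob (lastD x)) (DFo F x) := DFh F (last_incl x).

Definition eta_last_inv (x : NOb R) : hom (DFo F x) (Ft_ob (lastD x)) :=
  iso_inv (last_incl_iso x).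

Definition Ft_plus (c d : ob C) (h : hom c d) (h_plus : Rp R h) : hom (Ft_ob c) (Ft_ob d) :=
  DFh F (point_plus h_plus).

Definition Ft_minus (c z : ob C) (g : hom c z) (g_minus : Rm R g) : hom (Ft_ob c) (Ft_ob z) :=
  hcomp (eta_last_inv (chain1 g_minus)) (DFh F (chain1_incl g_minus)).

Lemma Ft_factor_natural (x y : NOb R) (f : NHom x y) (z : ob C) (g : hom (lastD x) z)
    (h : hom z (lastD y)) (g_minus : Rm R g) (h_plus : Rp R h) :
  hcomp h g = lastD_hom f ->
  hcomp (eta_last y) (hcomp (Ft_plus h_plus) (Ft_minus g_minus))
  = hcomp (DFh F f) (eta_last x).
Proof.
move=> gh_last.
have q_incl := DFh_le (chain1_lift_incl g_minus h_plus gh_last).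
have q_last := DFh_le (chain1_lift_last g_minus h_plus gh_last).
rewrite !DFh_comp in q_incl q_last.
rewrite /eta_last -q_incl /Ft_plus comp_assoc -q_last /Ft_minus /eta_last_inv.
by rewrite -!comp_assoc [hcomp (DFh F _) (hcomp (iso_inv _) _)]comp_assoc iso_inv_r comp_id_l.
Qed.

Definition reedy_factorization (a b : ob C) (u : hom a b) :
  {z : ob C & {g : hom a z & {h : hom z b & (Rm R g * Rp R h * (hcomp h g = u))%type}}}.
Proof.
have [z Hz] := constructive_indefinite_description _ (R_fact R u).
have [g Hg] := constructive_indefinite_description _ Hz.
have [h [g_minus [h_plus gh_u]]] := constructive_indefinite_description _ Hg.
exact: existT _ z (existT _ g (existT _ h (g_minus, h_plus, gh_u))).
Defined.

Definition Ft_hom (a b : ob C) (u : hom a b) : hom (Ft_ob a) (Ft_ob b) :=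
  let: existT _ (existT _ (existT _ (g_minus, h_plus, _))) := reedy_factorization u in
  hcomp (Ft_plus h_plus) (Ft_minus g_minus).

Lemma Ft_hom_lastD (x y : NOb R) (f : NHom x y) (u : hom (lastD x) (lastD y)) :
  lastD_hom f = u -> Ft_hom u = hcomp (eta_last_inv y) (hcomp (DFh F f) (eta_last x)).
Proof.
move<-; rewrite /Ft_hom; case: reedy_factorization => z [g [h [[g_minus h_plus] gh_u]]].
exact/iso_inv_comp_eq/Ft_factor_natural.
Qed.

Lemma Ft_hom_id (c : ob C) : Ft_hom (idm c) = idm (Ft_ob c).
Proof.
rewrite (Ft_hom_lastD (f:=Nid (point R c))) ?lastD_hom_id //.
by rewrite DFh_id comp_id_l /eta_last_inv iso_inv_l.
Qed.

Lemma Ft_hom_lastD_comp (x y z : NOb R) (f1 : NHom x y) (f2 : NHom y z) :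
  Ft_hom (hcomp (lastD_hom f2) (lastD_hom f1))
  = hcomp (Ft_hom (lastD_hom f2)) (Ft_hom (lastD_hom f1)).
Proof.
rewrite (Ft_hom_lastD (f:=Ncomp f2 f1)) ?lastD_hom_comp // !(Ft_hom_lastD erefl) DFh_comp.
rewrite -!comp_assoc [hcomp (eta_last y) (hcomp (eta_last_inv y) _)]comp_assoc.
by rewrite /eta_last_inv iso_inv_r comp_id_l !comp_assoc.
Qed.

Lemma eta_last_point (c : ob C) : eta_last (point R c) = idm (Ft_ob c).
Proof.
rewrite /eta_last -(DFh_id F (point R c)); apply: DFh_le.
by exists (fun i => leq0n _) => i /=; rewrite comp_id_l.
Qed.

Lemma eta_last_inv_point (c : ob C) : eta_last_inv (point R c) = idm (Ft_ob c).
Proof.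
have := iso_inv_l (last_incl_iso (point R c)).
by rewrite -/(eta_last_inv _) -/(eta_last _) eta_last_point comp_id_r.
Qed.

Lemma Ft_hom_plus (c d : ob C) (h : hom c d) (h_plus : Rp R h) :
  Ft_hom h = Ft_plus h_plus.
Proof.
rewrite (Ft_hom_lastD (lastD_point_plus h_plus)) eta_last_point eta_last_inv_point.
by rewrite comp_id_l comp_id_r.
Qed.

Lemma Ft_hom_minus (c z : ob C) (g : hom c z) (g_minus : Rm R g) :
  Ft_hom g = Ft_minus g_minus.
Proof. by rewrite (Ft_hom_lastD (lastD_chain1_incl g_minus)) eta_last_point comp_id_r. Qed.

Lemma Ft_hom_factor (a b z : ob C) (u : hom a b) (g : hom a z) (h : hom z b) :
  Rm R g -> Rp R h -> hcomp h g = u -> Ft_hom u = hcomp (Ft_hom h) (Ft_hom g).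
Proof.
move=> g_minus h_plus gh_u; rewrite {1}/Ft_hom.
case: reedy_factorization => z' [g' [h' [[g'_minus h'_plus] gh'_u]]].
rewrite -(Ft_hom_plus h'_plus) -(Ft_hom_minus g'_minus).
pose Ft_comp (s : {w : ob C & (hom a w * hom w b)%type}) :=
  hcomp (Ft_hom (projT2 s).2) (Ft_hom (projT2 s).1).
exact: (f_equal Ft_comp (R_fact_uniq g'_minus h'_plus gh'_u g_minus h_plus gh_u)).
Qed.

Lemma Ft_hom_comp_plus_plus (a b c : ob C) (h1 : hom a b) (h2 : hom b c) :
  Rp R h1 -> Rp R h2 -> Ft_hom (hcomp h2 h1) = hcomp (Ft_hom h2) (Ft_hom h1).
Proof.
move=> h1_plus h2_plus.
have := Ft_hom_lastD_comp (point_plus h1_plus) (point_plus h2_plus).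
by rewrite !lastD_point_plus.
Qed.

Lemma Ft_hom_comp_plus_minus (a b c : ob C) (h : hom a b) (g : hom b c) :
  Rp R h -> Rm R g -> Ft_hom (hcomp g h) = hcomp (Ft_hom g) (Ft_hom h).
Proof.
move=> h_plus g_minus.
have := Ft_hom_lastD_comp (point_plus h_plus) (chain1_incl g_minus).
by rewrite lastD_point_plus lastD_chain1_incl.
Qed.

Lemma Ft_hom_comp_minus_minus (a b c : ob C) (g : hom a b) (m : hom b c) :
  Rm R g -> Rm R m -> Ft_hom (hcomp m g) = hcomp (Ft_hom m) (Ft_hom g).
Proof.
move=> g_minus m_minus.
have := Ft_hom_lastD_comp (chain1_incl g_minus) (chain12 g_minus m_minus).
by rewrite lastD_chain1_incl lastD_chain12.
Qed.

Lemma Ft_hom_comp (a b c : ob C) (v : hom b c) (u : hom a b) :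
  Ft_hom (hcomp v u) = hcomp (Ft_hom v) (Ft_hom u).
Proof.
have [z1 [g1 [h1 [g1_minus [h1_plus gh1_u]]]]] := R_fact R u.
have [z2 [g2 [h2 [g2_minus [h2_plus gh2_v]]]]] := R_fact R v.
have [z3 [m [p [m_minus [p_plus mp_gh]]]]] := R_fact R (hcomp g2 h1).
have vu_fact : hcomp (hcomp h2 p) (hcomp m g1) = hcomp v u.
  by rewrite -gh1_u -gh2_v -!comp_assoc [hcomp p (hcomp m g1)]comp_assoc mp_gh -!comp_assoc.
have swap : hcomp (Ft_hom g2) (Ft_hom h1) = hcomp (Ft_hom p) (Ft_hom m).
  by rewrite -(Ft_hom_comp_plus_minus h1_plus g2_minus) (Ft_hom_factor m_minus p_plus mp_gh).
rewrite -vu_fact (Ft_hom_factor (Rm_comp g1_minus m_minus) (Rp_comp p_plus h2_plus) erefl).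
rewrite (Ft_hom_comp_plus_plus p_plus h2_plus) (Ft_hom_comp_minus_minus g1_minus m_minus).
rewrite (Ft_hom_factor g1_minus h1_plus gh1_u) (Ft_hom_factor g2_minus h2_plus gh2_v).
by rewrite -!comp_assoc [hcomp (Ft_hom g2) (hcomp (Ft_hom h1) _)]comp_assoc swap -!comp_assoc.
Qed.

Definition Ft : Functor C D := Build_Functor Ft_hom_id Ft_hom_comp.

Lemma Ft_natural (x y : NOb R) (f : NHom x y) :
  hcomp (eta_last y) (fhom Ft (lastD_hom f)) = hcomp (DFh F f) (eta_last x).
Proof. by rewrite /= (Ft_hom_lastD erefl) comp_assoc /eta_last_inv iso_inv_r comp_id_l. Qed.

End PushDown.

Theorem proposition7p10 (C : Category) (R : Reedy C) (D : Category)
  (F : DownFunctor R D) :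
  (forall (x y : NOb R) (f : NHom x y), lastD_weq f -> is_iso (DFh F f)) ->
  exists (Ft : Functor C D)
         (eta : forall x : NOb R, hom (fob Ft (lastD x)) (DFo F x)),
    (forall x : NOb R, is_iso (eta x)) /\
    (forall (x y : NOb R) (f : NHom x y),
        hcomp (eta y) (fhom Ft (lastD_hom f)) = hcomp (DFh F f) (eta x)).
Proof.
move=> weq_iso.
have last_incl_iso (x : NOb R) : is_iso (DFh F (last_incl x)).
  exact/weq_iso/last_incl_weq.
exists (Ft last_incl_iso), (eta_last F); split; first exact: last_incl_iso.
exact: Ft_natural.
Qed.
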